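(* Let $0<q<1$ and let $a,b,u,v,z_1,z_2\in\mathbb C$ with $|uz_1|<1$, $|vz_2|<1$, and $az_1q^k\neq1$, $bz_2q^k\ne1$ for all $k\in\mathbb N_0$. Then $$\sum_{m,n=0}^\infty H_{m,n}(z_1,z_2|q)\,\frac{\prod_{i=0}^{m-1}(u-aq^i)\,\prod_{i=0}^{n-1}(v-bq^i)}{(q;q)_m(q;q)_n} =\frac{(az_1,bz_2;q)_\infty}{(uz_1,vz_2;q)_\infty}\sum_{k=0}^\infty\frac{\prod_{i=0}^{k-1}(u-aq^i)(v-bq^i)}{(q,az_1,bz_2;q)_k}(-1)^kq^{\binom k2}.$$ (In basic hypergeometric notation, the left side is $\sum H_{m,n}\frac{u^m(a/u;q)_m v^n(b/v;q)_n}{(q;q)_m(q;q)_n}$ and the right side is $\frac{(az_1,bz_2;q)_\infty}{(uz_1,vz_2;q)_\infty}\,{}_2\phi_2(a/u,b/v;az_1,bz_2;q,uv)$.)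
   Context: $(a;q)_n=\prod_{j=0}^{n-1}(1-aq^j)$, $(a;q)_\infty=\prod_{j\ge0}(1-aq^j)$, $(a_1,\dots,a_r;q)_n=\prod_i(a_i;q)_n$, $\left[{m\atop k}\right]_q=\frac{(q;q)_m}{(q;q)_k(q;q)_{m-k}}$, $m\wedge n=\min\{m,n\}$. The first $q$-$2D$-Hermite polynomials are $$H_{m,n}(z_1,z_2|q)=\sum_{k=0}^{m\wedge n}\left[{m\atop k}\right]_q\left[{n\atop k}\right]_q(-1)^kq^{\binom k2}(q;q)_k\,z_1^{m-k}z_2^{n-k}.$$ *)

From Stdlib Require Import Reals Lra.
Open Scope R_scope.

Definition Cx := (R * R)%type.
Definition RtoC (r : R) : Cx := (r, 0).
Definition Czero : Cx := (0, 0).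
Definition Cone : Cx := (1, 0).
Definition Cadd (x y : Cx) : Cx := (fst x + fst y, snd x + snd y).
Definition Copp (x : Cx) : Cx := (- fst x, - snd x).
Definition Csub (x y : Cx) : Cx := Cadd x (Copp y).
Definition Cmul (x y : Cx) : Cx :=
  (fst x * fst y - snd x * snd y, fst x * snd y + snd x * fst y).
Definition Cinv (x : Cx) : Cx :=
  (fst x / (fst x ^ 2 + snd x ^ 2), - snd x / (fst x ^ 2 + snd x ^ 2)).
Definition Cdiv (x y : Cx) : Cx := Cmul x (Cinv y).
Definition Cmod (x : Cx) : R := sqrt (fst x ^ 2 + snd x ^ 2).
Fixpoint Cpow (x : Cx) (n : nat) : Cx :=
  match n with O => Cone | S n' => Cmul x (Cpow x n') end.

Fixpoint Csum (f : nat -> Cx) (n : nat) : Cx :=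
  match n with O => Czero | S n' => Cadd (Csum f n') (f n') end.
Fixpoint Cprod (f : nat -> Cx) (n : nat) : Cx :=
  match n with O => Cone | S n' => Cmul (Cprod f n') (f n') end.

Definition Cseq_cv (s : nat -> Cx) (l : Cx) : Prop :=
  forall eps : R, eps > 0 ->
    exists N : nat, forall n : nat, (n >= N)%nat -> Cmod (Csub (s n) l) < eps.
Definition Cseries_cv (f : nat -> Cx) (l : Cx) : Prop :=
  Cseq_cv (fun N => Csum f N) l.

Definition qpoch (a : Cx) (q : R) (n : nat) : Cx :=
  Cprod (fun j => Csub Cone (Cmul a (RtoC (q ^ j)))) n.

Definition qbinom (q : R) (m k : nat) : Cx :=
  Cdiv (qpoch (RtoC q) q m) (Cmul (qpoch (RtoC q) q k) (qpoch (RtoC q) q (m - k))).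

Definition binom2 (k : nat) : nat := Nat.div (k * (k - 1)) 2.

Definition Hq (m n : nat) (z1 z2 : Cx) (q : R) : Cx :=
  Csum (fun k =>
    Cmul (Cmul (Cmul (Cmul (Cmul (qbinom q m k) (qbinom q n k))
                             (Cpow (RtoC (-1)) k))
                       (RtoC (q ^ binom2 k)))
                 (qpoch (RtoC q) q k))
         (Cmul (Cpow z1 (m - k)) (Cpow z2 (n - k))))
    (S (Nat.min m n)).

(* The q-binomial theorem  sum_j (u - c)(u - cq)...(u - cq^(j-1)) / (q;q)_j z^j = (cz;q)_oo / (uz;q)_oo
   for |uz| < 1 follows from the functional equation (1 - uz) F(z) = (1 - cz) F(qz) of the series F,
   iterated n times, together with F(q^n z) -> 1; its case u = 0 shows that (x;q)_n converges.

   In H_{m,n} the q-binomial coefficients cancel against (q;q)_m (q;q)_n, so the (m,n) term of the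
   double series is sum_(k <= min(m,n)) w_k A_k(m) B_k(n), where A_k and B_k are the terms of the
   q-binomial series in z1 and z2 with parameters a q^k and b q^k, shifted by k places. Summing over n
   evaluates the B-series; summing over m is an interchange of limits justified by Tannery's theorem,
   since w_k decays like q^(k^2/2). By the q-binomial theorem both series become ratios of infinite
   products, and (a z1;q)_oo / (a z1 q^k;q)_oo = (a z1;q)_k produces the 2phi2 denominators. *)

From Pilot Require Import Defs.
From Stdlib Require Import Reals Lra Lia.
From Coquelicot Require Coquelicot.
Open Scope R_scope.

Module QHermite.
Import Coquelicot.Coquelicot.

Local Notation "s --> l" := (filterlim s eventually (locally l)) (at level 70).

(* Equalities produced by Coquelicot's generic lemmas live in [AbelianMonoid.sort _];
   [ring] and [field] need them stated in [C]. *)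
Ltac C_eq := match goal with |- ?l = ?r => change (@eq C l r) end.

Lemma lim_C_spec (s : nat -> C) (l : C) :
  s --> l <-> forall eps : posreal, eventually (fun n => Cmod (s n - l) < eps).
Proof. exact (filterlim_locally_ball_norm (K := C_AbsRing) (U := C_NormedModule) s l). Qed.

Lemma is_series_C_spec (a : nat -> C) (l : C) :
  is_series a l <-> forall eps : posreal, eventually (fun N => Cmod (sum_n a N - l) < eps).
Proof. exact (lim_C_spec (sum_n a) l). Qed.

Lemma Cseq_cv_lim (s : nat -> C) (l : C) : Cseq_cv s l <-> s --> l.
Proof.
  rewrite lim_C_spec. split.
  - intros H [eps Heps]. destruct (H eps Heps) as [N HN]. exists N. exact HN.
  - intros H eps Heps. destruct (H (mkposreal eps Heps)) as [N HN]. exists N. exact HN.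
Qed.

Lemma Csum_sum_n (f : nat -> C) (n : nat) : Csum f (S n) = sum_n f n.
Proof.
  induction n as [|n IH].
  - rewrite sum_O. change (0 + f O = f O)%C. ring.
  - rewrite sum_Sn, <- IH. reflexivity.
Qed.

Lemma Cseries_cv_is_series (f : nat -> C) (l : C) : Cseries_cv f l <-> is_series f l.
Proof.
  unfold Cseries_cv, is_series. rewrite <- Cseq_cv_lim. split.
  - intros H eps Heps. destruct (H eps Heps) as [N HN]. exists N. intros n Hn.
    rewrite <- Csum_sum_n. apply HN. lia.
  - intros H eps Heps. destruct (H eps Heps) as [N HN]. exists (S N). intros n Hn.
    destruct n as [|n]; [lia|]. rewrite Csum_sum_n. apply HN. lia.
Qed.

Lemma lim_plus (s t : nat -> C) (a b : C) :
  s --> a -> t --> b -> (fun n => s n + t n)%C --> (a + b)%C.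
Proof. intros Hs Ht. exact (filterlim_comp_2 _ _ _ Hs Ht (filterlim_plus a b)). Qed.

Lemma lim_mult (s t : nat -> C) (a b : C) :
  s --> a -> t --> b -> (fun n => s n * t n)%C --> (a * b)%C.
Proof.
  intros Hs Ht.
  (* [filterlim_mult] uses the uniform structure of [C_AbsRing]; [locally_C] identifies the two. *)
  assert (to_abs : forall (f : nat -> C) x, f --> x ->
            filterlim f eventually (@locally (AbsRing_UniformSpace C_AbsRing) x)).
  { intros f x Hf. apply (filterlim_filter_le_2 _ (fun P => proj2 (locally_C x P)) Hf). }
  apply (filterlim_filter_le_2 _ (fun P => proj1 (locally_C (a * b)%C P))).
  exact (filterlim_comp_2 _ _ _ (to_abs _ _ Hs) (to_abs _ _ Ht) (@filterlim_mult C_AbsRing a b)).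
Qed.

Lemma lim_sum_n (f : nat -> nat -> C) (g : nat -> C) (K : nat) :
  (forall k, (fun M => f M k) --> g k) -> (fun M => sum_n (f M) K) --> sum_n g K.
Proof.
  intros Hf. induction K as [|K IH].
  - rewrite sum_O. apply (filterlim_ext (fun M => f M O)); [|exact (Hf O)].
    intros M. rewrite sum_O. reflexivity.
  - rewrite sum_Sn. apply (filterlim_ext (fun M => sum_n (f M) K + f M (S K))%C).
    + intros M. rewrite sum_Sn. reflexivity.
    + exact (lim_plus _ _ _ _ IH (Hf (S K))).
Qed.

Lemma lim_unique (s : nat -> C) (a b : C) : s --> a -> s --> b -> a = b.
Proof. exact (@filterlim_locally_unique _ _ C_NormedModule _ _ s a b). Qed.

Lemma lim_RtoC (r : nat -> R) (l : R) : is_lim_seq r l -> (fun n => RtoC (r n)) --> RtoC l.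
Proof.
  intros H. apply lim_C_spec. intros eps.
  apply is_lim_seq_spec in H. destruct (H eps) as [N HN]. exists N. intros n Hn.
  rewrite <- RtoC_minus, Cmod_R. exact (HN n Hn).
Qed.

Lemma lim_Cmod_le (s : nat -> C) (l : C) (B : R) :
  s --> l -> eventually (fun n => Cmod (s n) <= B) -> Cmod l <= B.
Proof.
  intros Hs HB.
  assert (Hn : is_lim_seq (fun n => Cmod (s n)) (Cmod l))
    by exact (filterlim_comp _ _ _ _ _ _ _ _ Hs (@filterlim_norm _ C_NormedModule l)).
  exact (is_lim_seq_le_loc _ _ _ _ HB Hn (is_lim_seq_const B)).
Qed.

Lemma lim_shift (s : nat -> C) (l : C) (k : nat) : s --> l -> (fun n => s (k + n)%nat) --> l.
Proof.
  rewrite !lim_C_spec. intros H eps.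
  destruct (H eps) as [N HN]. exists N. intros n Hn. apply HN. lia.
Qed.

Lemma lim_of_mult_lim_1 (s g : nat -> C) (L : C) :
  (forall n, (s n * g n)%C = L) -> g --> RtoC 1 -> s --> L.
Proof.
  intros Hsg Hg. rewrite lim_C_spec in *. intros eps.
  pose proof (Cmod_ge_0 L) as HL0.
  set (M := 2 * Cmod L + 1).
  assert (Hd : 0 < Rmin (1/2) (eps / M)).
  { apply Rmin_pos; [lra|]. apply Rdiv_lt_0_compat; [apply cond_pos | unfold M; lra]. }
  destruct (Hg (mkposreal _ Hd)) as [N HN]. exists N. intros n Hn.
  specialize (HN n Hn). simpl in HN.
  pose proof (Rmin_l (1/2) (eps / M)). pose proof (Rmin_r (1/2) (eps / M)).
  assert (Hg_ge : 1/2 <= Cmod (g n)).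
  { pose proof (Cmod_triangle (g n) (1 - g n)) as T.
    replace (g n + (1 - g n))%C with (RtoC 1) in T by ring.
    rewrite Cmod_1, <- (Cmod_opp (1 - g n)) in T. replace (- (1 - g n))%C with (g n - 1)%C in T by ring. lra. }
  assert (Hs_le : Cmod (s n) <= 2 * Cmod L).
  { rewrite <- (Hsg n), Cmod_mult.
    pose proof (Rmult_le_compat_l _ _ _ (Cmod_ge_0 (s n)) Hg_ge). lra. }
  replace (s n - L)%C with (- (s n * (g n - 1)))%C by (rewrite <- (Hsg n); ring).
  rewrite Cmod_opp, Cmod_mult.
  apply Rle_lt_trans with (M * Cmod (g n - 1)).
  - apply Rmult_le_compat_r; [apply Cmod_ge_0 | unfold M; lra].
  - apply Rlt_le_trans with (M * (eps / M)); [apply Rmult_lt_compat_l; [unfold M; lra | lra]|].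
    right. field. unfold M. lra.
Qed.


Lemma ex_series_ratio (t rho : nat -> R) (l : R) :
  (forall n, 0 <= t n) -> (forall n, t (S n) <= rho n * t n) ->
  is_lim_seq rho l -> l < 1 -> ex_series t.
Proof.
  intros Ht Hstep Hrho Hl.
  set (r := Rmax 0 ((1 + l) / 2)).
  assert (Hr : 0 <= r < 1) by (split; [apply Rmax_l | apply Rmax_lub_lt; lra]).
  apply is_lim_seq_spec in Hrho.
  assert (Heps : 0 < (1 - l) / 2) by lra.
  destruct (Hrho (mkposreal _ Heps)) as [N HN]; simpl in HN.
  assert (Hratio : forall n, (N <= n)%nat -> t (S n) <= r * t n).
  { intros n Hn. specialize (HN n Hn). apply Rabs_def2 in HN.
    assert (rho n <= r) by (apply Rle_trans with ((1 + l) / 2); [lra | apply Rmax_r]).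
    eapply Rle_trans; [apply Hstep | apply Rmult_le_compat_r; [apply Ht | assumption]]. }
  assert (Hgeom : forall n, t (N + n)%nat <= t N * r ^ n).
  { induction n as [|n IH]; [rewrite Nat.add_0_r; simpl; lra|].
    rewrite Nat.add_succ_r. eapply Rle_trans; [apply Hratio; lia|].
    simpl. pose proof (Ht (N + n)%nat). nra. }
  apply (ex_series_incr_n t N), (@ex_series_le _ R_CompleteNormedModule _ (fun n => t N * r ^ n)).
  - intros n. change (Rabs (t (N + n)%nat) <= t N * r ^ n).
    rewrite Rabs_pos_eq by apply Ht. apply Hgeom.
  - apply (@ex_series_scal_l _ R_NormedModule (t N)), ex_series_geom.
    rewrite Rabs_pos_eq; lra.
Qed.

Lemma sum_n_le_is_series (t : nat -> R) (l : R) (N : nat) :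
  (forall n, 0 <= t n) -> is_series t l -> sum_n t N <= l.
Proof.
  intros Ht Hl.
  assert (Hmono : forall n, (N <= n)%nat -> sum_n t N <= sum_n t n).
  { intros n Hn. induction Hn as [|n Hn IH]; [lra|].
    rewrite sum_Sn. pose proof (Ht (S n)). change (sum_n t N <= sum_n t n + t (S n)). lra. }
  apply (is_lim_seq_le_loc (fun _ => sum_n t N) (sum_n t) (sum_n t N) l).
  - exists N. exact Hmono.
  - apply is_lim_seq_const.
  - exact Hl.
Qed.

Definition delay (k : nat) (f : nat -> C) (n : nat) : C :=
  if (k <=? n)%nat then f (n - k)%nat else RtoC 0.

Lemma sum_n_delay_lt (k : nat) (f : nat -> C) (n : nat) :
  (n < k)%nat -> sum_n (delay k f) n = RtoC 0.
Proof.
  assert (Hz : forall j, (j < k)%nat -> delay k f j = RtoC 0).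
  { intros j Hj. unfold delay. destruct (Nat.leb_spec k j); [lia | reflexivity]. }
  induction n as [|n IH]; intros Hn.
  - rewrite sum_O. apply Hz. exact Hn.
  - rewrite sum_Sn, IH, Hz by lia. apply Cplus_0_l.
Qed.

Lemma sum_n_delay (k : nat) (f : nat -> C) (n : nat) :
  sum_n (delay k f) (k + n) = sum_n f n.
Proof.
  assert (Hf : forall j, delay k f (k + j) = f j).
  { intros j. unfold delay. destruct (Nat.leb_spec k (k + j)); [|lia]. f_equal. lia. }
  induction n as [|n IH].
  - rewrite sum_O, Nat.add_0_r. destruct k as [|k].
    + rewrite sum_O. exact (Hf O).
    + rewrite sum_Sn, sum_n_delay_lt by lia.
      rewrite <- (Hf O), Nat.add_0_r. apply Cplus_0_l.
  - rewrite Nat.add_succ_r, !sum_Sn, IH, <- Hf, Nat.add_succ_r. reflexivity.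
Qed.

Lemma is_series_delay (k : nat) (f : nat -> C) (l : C) :
  is_series f l -> is_series (delay k f) l.
Proof.
  rewrite !is_series_C_spec. intros H eps.
  destruct (H eps) as [N HN]. exists (k + N)%nat. intros n Hn.
  replace n with (k + (n - k))%nat by lia. rewrite sum_n_delay. apply HN. lia.
Qed.

Lemma sum_n_zero_tail (a : nat -> C) (N M : nat) :
  (forall k, (N < k)%nat -> a k = RtoC 0) -> (N <= M)%nat -> sum_n a M = sum_n a N.
Proof.
  intros Ha HNM. induction HNM as [|M HNM IH]; [reflexivity|].
  rewrite sum_Sn, Ha, IH by lia. apply Cplus_0_r.
Qed.

Lemma is_series_finite (a : nat -> C) (N : nat) :
  (forall k, (N < k)%nat -> a k = RtoC 0) -> is_series a (sum_n a N).
Proof.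
  intros Ha. apply is_series_C_spec. intros eps. exists N. intros n Hn.
  rewrite (sum_n_zero_tail a N n Ha Hn).
  replace (sum_n a N - sum_n a N)%C with (RtoC 0) by ring. rewrite Cmod_0. apply cond_pos.
Qed.

Lemma is_series_sum_n (f : nat -> nat -> C) (l : nat -> C) (K : nat) :
  (forall k, is_series (f k) (l k)) ->
  is_series (fun n => sum_n (fun k => f k n) K) (sum_n l K).
Proof.
  intros Hf. unfold is_series.
  apply (filterlim_ext (fun N => sum_n (fun k => sum_n (f k) N) K)).
  - intros N. apply sum_n_switch.
  - apply lim_sum_n. exact Hf.
Qed.

Lemma sum_n_Cmult_r (f : nat -> C) (x : C) (n : nat) :
  (sum_n f n * x)%C = sum_n (fun k => f k * x)%C n.
Proof.
  induction n as [|n IH]; [rewrite !sum_O; reflexivity|].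
  rewrite !sum_Sn, <- IH. change ((sum_n f n + f (S n)) * x = sum_n f n * x + f (S n) * x)%C. ring.
Qed.

Lemma eventually_forall_le (P : nat -> nat -> Prop) (K : nat) :
  (forall k, (k <= K)%nat -> eventually (P k)) ->
  eventually (fun M => forall k, (k <= K)%nat -> P k M).
Proof.
  induction K as [|K IH]; intros HP.
  - apply (filter_imp (P O)); [|apply HP; lia].
    intros M HM k Hk. replace k with O by lia. exact HM.
  - apply (filter_imp (fun M => (forall k, (k <= K)%nat -> P k M) /\ P (S K) M)).
    + intros M [H1 H2] k Hk. destruct (Nat.eq_dec k (S K)) as [->|]; [exact H2|].
      apply H1. lia.
    + apply filter_and; [apply IH; intros; apply HP; lia | apply HP; lia].
Qed.

Lemma Cmod_sum_n_m_le_const (a : nat -> C) (n m : nat) (e : R) :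
  (forall k, (n <= k <= m)%nat -> Cmod (a k) <= e) -> Cmod (sum_n_m a n m) <= INR (S m - n) * e.
Proof.
  intros Ha. eapply Rle_trans; [apply (norm_sum_n_m (V := C_NormedModule))|].
  rewrite <- sum_n_m_const, (sum_n_m_ext_loc _ (fun k => Rmin (Cmod (a k)) e)).
  - apply sum_n_m_le. intros k. apply Rmin_r.
  - intros k Hk. symmetry. apply Rmin_left, Ha, Hk.
Qed.

Lemma is_lim_series_dominated (h : nat -> nat -> C) (s g : nat -> C) (D : nat -> R) :
  (forall M, is_series (h M) (s M)) -> (forall k, (fun M => h M k) --> g k) ->
  (forall M k, Cmod (h M k) <= D k) -> ex_series D ->
  exists L, is_series g L /\ s --> L.
Proof.
  intros HS Hh HD HDs.
  assert (Hg : forall k, Cmod (g k) <= D k).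
  { intros k. apply (lim_Cmod_le _ _ _ (Hh k)). exists O. intros M _. apply HD. }
  destruct (@ex_series_le _ C_CompleteNormedModule g D Hg HDs) as [L HL].
  exists L. split; [exact HL|].
  apply lim_C_spec. intros eps.
  assert (Heps4 : 0 < eps / 4) by (pose proof (cond_pos eps); lra).
  destruct (Cauchy_ex_series D HDs (mkposreal _ Heps4)) as [K HK]; simpl in HK.
  set (d := eps / (4 * INR (S K))).
  assert (Hd : 0 < d) by (unfold d; pose proof (lt_0_INR (S K) ltac:(lia)); apply Rdiv_lt_0_compat; lra).
  destruct (eventually_forall_le (fun k M => Cmod (h M k - g k) < d) K) as [N HN].
  { intros k _. exact (proj1 (lim_C_spec _ _) (Hh k) (mkposreal _ Hd)). }
  exists N. intros M HM.
  assert (Hdiff : is_series (fun k => h M k - g k)%C (s M - L)%C)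
    by exact (is_series_minus _ _ _ _ (HS M) HL).
  apply Rle_lt_trans with (3 * (eps / 4)); [|lra].
  apply (lim_Cmod_le _ _ _ Hdiff). exists (S K). intros n Hn.
  unfold sum_n. rewrite (sum_n_m_Chasles _ O K n) by lia.
  eapply Rle_trans; [apply Cmod_triangle|].
  assert (Hhead : Cmod (sum_n_m (fun k => h M k - g k)%C O K) <= eps / 4).
  { eapply Rle_trans; [apply Cmod_sum_n_m_le_const with (e := d)|].
    - intros k Hk. apply Rlt_le, HN; lia.
    - rewrite Nat.sub_0_r. unfold d. right. field. pose proof (lt_0_INR (S K) ltac:(lia)). lra. }
  assert (Htail : Cmod (sum_n_m (fun k => h M k - g k)%C (S K) n) <= 2 * (eps / 4)).
  { eapply Rle_trans; [apply (norm_sum_n_m (V := C_NormedModule))|].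
    apply Rle_trans with (sum_n_m (fun k => 2 * D k) (S K) n).
    - apply sum_n_m_le. intros k. eapply Rle_trans; [apply Cmod_triangle|].
      rewrite Cmod_opp. pose proof (HD M k). pose proof (Hg k). lra.
    - specialize (HK (S K) n ltac:(lia) ltac:(lia)).
      change (Rabs (sum_n_m D (S K) n) < eps / 4) in HK. apply Rabs_def2 in HK.
      rewrite (sum_n_m_mult_l (K := R_Ring) 2).
      change (2 * sum_n_m D (S K) n <= 2 * (eps / 4)). lra. }
  apply Rle_trans with (eps / 4 + 2 * (eps / 4)); [|lra].
  apply Rplus_le_compat; [exact Hhead | exact Htail].
Qed.


Lemma Cprod_add (f : nat -> C) (k n : nat) :
  Cprod f (k + n) = (Cprod f k * Cprod (fun i => f (k + i)%nat) n)%C.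
Proof.
  induction n as [|n IH].
  - rewrite Nat.add_0_r. symmetry. apply Cmult_1_r.
  - rewrite Nat.add_succ_r. change (@eq C (Cprod f (k + n) * f (k + n)%nat)
      (Cprod f k * (Cprod (fun i => f (k + i)%nat) n * f (k + n)%nat)))%C.
    rewrite IH. ring.
Qed.

Lemma Cprod_ext (f g : nat -> C) (n : nat) : (forall i, f i = g i) -> Cprod f n = Cprod g n.
Proof. intros Hfg. induction n as [|n IH]; [reflexivity|]. simpl. rewrite IH, Hfg. reflexivity. Qed.

Lemma Cprod_mult (f g : nat -> C) (n : nat) :
  Cprod (fun i => f i * g i)%C n = (Cprod f n * Cprod g n)%C.
Proof.
  induction n as [|n IH]; [symmetry; apply Cmult_1_r|].
  change (@eq C (Cprod (fun i => f i * g i)%C n * (f n * g n))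
    (Cprod f n * f n * (Cprod g n * g n)))%C.
  rewrite IH. ring.
Qed.

Lemma Cprod_neq_0 (f : nat -> C) (n : nat) :
  (forall i, (i < n)%nat -> f i <> RtoC 0) -> Cprod f n <> RtoC 0.
Proof.
  induction n as [|n IH]; intros Hf.
  - intros E. apply RtoC_inj in E. lra.
  - apply Cmult_neq_0; [apply IH; intros i Hi|]; apply Hf; lia.
Qed.

Section QBinomial.

Variable q : R.
Hypothesis Hq01 : 0 < q < 1.

Local Notation qfac n := (qpoch (RtoC q) q n).

(* [qpochh u c n = u^n (c/u;q)_n], written without division. *)
Definition qpochh (u c : C) (n : nat) : C := Cprod (fun i => u - c * RtoC (q ^ i))%C n.

Definition qbin_term (u c z : C) (j : nat) : C := (qpochh u c j / qfac j * z ^ j)%C.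

(* Meaningful only when the series converges, e.g. for [|u| |z| < 1]. *)
Definition qbin (u c z : C) : C := @iota C_CompleteNormedModule (is_series (qbin_term u c z)).

Fixpoint qbin_major (U K Z : R) (j : nat) : R :=
  match j with
  | O => 1
  | S j => qbin_major U K Z j * ((U + K * q ^ j) * Z / (1 - q ^ S j))
  end.

Lemma qpow_pos (j : nat) : 0 < q ^ j.
Proof. apply pow_lt. lra. Qed.

Lemma qpow_le_1 (j : nat) : q ^ j <= 1.
Proof. destruct j as [|j]; [simpl; lra|]. apply Rlt_le, (pow_lt_1_compat q (S j)); [lra | lia]. Qed.

Lemma qpow_S_lt_1 (j : nat) : q ^ S j < 1.
Proof. apply (pow_lt_1_compat q (S j)); [lra | lia]. Qed.

Lemma qpochh_add (u c : C) (k n : nat) :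
  qpochh u c (k + n) = (qpochh u c k * qpochh u (c * RtoC (q ^ k)) n)%C.
Proof.
  unfold qpochh. rewrite Cprod_add. f_equal. apply Cprod_ext. intros i.
  rewrite pow_add, RtoC_mult. ring.
Qed.

Lemma qfac_S (n : nat) : qfac (S n) = (qfac n * (1 - RtoC (q ^ S n)))%C.
Proof. change (qfac n * (1 - RtoC q * RtoC (q ^ n)) = qfac n * (1 - RtoC (q * q ^ n)))%C.
  rewrite RtoC_mult. reflexivity. Qed.

Lemma one_sub_qpow_neq_0 (n : nat) : (1 - RtoC (q ^ S n))%C <> RtoC 0.
Proof. rewrite <- RtoC_minus. intros E. apply RtoC_inj in E. pose proof (qpow_S_lt_1 n). lra. Qed.

Lemma qfac_neq_0 (n : nat) : qfac n <> RtoC 0.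
Proof.
  apply Cprod_neq_0. intros i _. change (1 - RtoC q * RtoC (q ^ i))%C with (1 - RtoC (q * q ^ i))%C.
  rewrite <- RtoC_mult. apply one_sub_qpow_neq_0.
Qed.

Lemma qbin_term_0 (u c z : C) : qbin_term u c z 0 = RtoC 1.
Proof. unfold qbin_term, qpochh. change (1 / 1 * 1 = 1)%C. field. Qed.

Lemma qbin_term_S (u c z : C) (j : nat) :
  (qbin_term u c z (S j) * (1 - RtoC (q ^ S j)))%C = (qbin_term u c z j * (u - c * RtoC (q ^ j)) * z)%C.
Proof.
  unfold qbin_term. rewrite qfac_S. change (qpochh u c (S j)) with (qpochh u c j * (u - c * RtoC (q ^ j)))%C.
  pose proof (qfac_neq_0 j). pose proof (one_sub_qpow_neq_0 j).
  simpl Cpow. field. auto.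
Qed.

Lemma qbin_term_scale (u c z : C) (r : R) (j : nat) :
  qbin_term u c (RtoC r * z) j = (RtoC (r ^ j) * qbin_term u c z j)%C.
Proof. unfold qbin_term. rewrite Cpow_mult_l, RtoC_pow. ring. Qed.

Lemma qbin_major_nonneg (U K Z : R) (j : nat) :
  0 <= U -> 0 <= K -> 0 <= Z -> 0 <= qbin_major U K Z j.
Proof.
  intros HU HK HZ. induction j as [|j IH]; simpl; [lra|].
  pose proof (qpow_pos j). pose proof (qpow_S_lt_1 j). simpl in *.
  apply Rmult_le_pos; [exact IH|]. apply Rdiv_le_0_compat; [|lra].
  apply Rmult_le_pos; nra.
Qed.

Lemma qbin_term_le (u c c' z z' : C) (j : nat) :
  Cmod c' <= Cmod c -> Cmod z' <= Cmod z ->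
  Cmod (qbin_term u c' z' j) <= qbin_major (Cmod u) (Cmod c) (Cmod z) j.
Proof.
  intros Hc Hz. induction j as [|j IH].
  - rewrite qbin_term_0, Cmod_1. simpl. lra.
  - pose proof (qpow_pos j) as Hqj. pose proof (qpow_S_lt_1 j) as HqS.
    assert (Hfac : Cmod (u - c' * RtoC (q ^ j)) <= Cmod u + Cmod c * q ^ j).
    { eapply Rle_trans; [apply Cmod_triangle|]. rewrite Cmod_opp, Cmod_mult, Cmod_R, Rabs_pos_eq by lra.
      pose proof (Rmult_le_compat_r _ _ _ (Rlt_le _ _ Hqj) Hc). lra. }
    assert (Hmod : Cmod (qbin_term u c' z' (S j)) * (1 - q ^ S j)
                   = Cmod (qbin_term u c' z' j) * Cmod (u - c' * RtoC (q ^ j)) * Cmod z').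
    { rewrite <- !Cmod_mult, <- qbin_term_S, Cmod_mult, <- RtoC_minus, Cmod_R, Rabs_pos_eq by lra.
      reflexivity. }
    cbn [qbin_major]. apply Rmult_le_reg_r with (1 - q ^ S j); [lra|].
    rewrite Hmod.
    set (M := qbin_major (Cmod u) (Cmod c) (Cmod z) j).
    replace (M * ((Cmod u + Cmod c * q ^ j) * Cmod z / (1 - q ^ S j)) * (1 - q ^ S j))
      with (M * (Cmod u + Cmod c * q ^ j) * Cmod z) by (field; lra).
    apply Rmult_le_compat; [apply Rmult_le_pos; apply Cmod_ge_0 | apply Cmod_ge_0 | | exact Hz].
    apply Rmult_le_compat; [apply Cmod_ge_0 | apply Cmod_ge_0 | exact IH | exact Hfac].
Qed.

Lemma ex_series_qbin_major (U K Z : R) :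
  0 <= U -> 0 <= K -> 0 <= Z -> U * Z < 1 -> ex_series (qbin_major U K Z).
Proof.
  intros HU HK HZ HUZ.
  apply (ex_series_ratio _ (fun j => (U + K * q ^ j) * Z / (1 - q ^ S j)) (U * Z)).
  - intros j. apply qbin_major_nonneg; assumption.
  - intros j. cbn [qbin_major]. rewrite Rmult_comm. apply Rle_refl.
  - assert (Hgeom : is_lim_seq (fun j => q ^ j) 0)
      by (apply is_lim_seq_geom; rewrite Rabs_pos_eq; lra).
    replace (U * Z) with ((U + K * 0) * Z / (1 - q * 0)) by field.
    apply is_lim_seq_div'; [| |lra].
    + apply is_lim_seq_mult'; [|apply is_lim_seq_const].
      apply is_lim_seq_plus'; [apply is_lim_seq_const|].
      apply (is_lim_seq_scal_l _ K 0), Hgeom.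
    + apply is_lim_seq_minus'; [apply is_lim_seq_const|].
      apply (is_lim_seq_scal_l _ q 0), Hgeom.
  - exact HUZ.
Qed.

Lemma is_series_qbin (u c z : C) :
  Cmod u * Cmod z < 1 -> is_series (qbin_term u c z) (qbin u c z).
Proof.
  intros Huz.
  destruct (@ex_series_le _ C_CompleteNormedModule (qbin_term u c z)
              (qbin_major (Cmod u) (Cmod c) (Cmod z))) as [l Hl].
  - intros j. apply qbin_term_le; apply Rle_refl.
  - apply ex_series_qbin_major; auto using Cmod_ge_0.
  - replace (qbin u c z) with l; [exact Hl|].
    symmetry. exact (iota_filterlim_locally _ l Hl).
Qed.

Lemma qbin_partial_le (u c c' z : C) (n : nat) :
  Cmod u * Cmod z < 1 -> Cmod c' <= Cmod c ->
  Cmod (sum_n (qbin_term u c' z) n) <= Series (qbin_major (Cmod u) (Cmod c) (Cmod z)).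
Proof.
  intros Huz Hc.
  eapply Rle_trans; [apply (norm_sum_n_m (V := C_NormedModule))|].
  apply Rle_trans with (sum_n (qbin_major (Cmod u) (Cmod c) (Cmod z)) n).
  - apply sum_n_m_le. intros j. apply qbin_term_le; [exact Hc | apply Rle_refl].
  - apply sum_n_le_is_series.
    + intros j. apply qbin_major_nonneg; apply Cmod_ge_0.
    + apply Series_correct, ex_series_qbin_major; auto using Cmod_ge_0.
Qed.

Lemma qbin_le (u c c' z : C) :
  Cmod u * Cmod z < 1 -> Cmod c' <= Cmod c ->
  Cmod (qbin u c' z) <= Series (qbin_major (Cmod u) (Cmod c) (Cmod z)).
Proof.
  intros Huz Hc. apply (lim_Cmod_le _ _ _ (is_series_qbin u c' z Huz)).
  exists O. intros n _. apply qbin_partial_le; assumption.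
Qed.

Lemma Cmod_qpow_mult_le (x : C) (n : nat) : Cmod (RtoC (q ^ n) * x) <= Cmod x.
Proof.
  rewrite Cmod_mult, Cmod_R, Rabs_pos_eq by (apply Rlt_le, qpow_pos).
  pose proof (qpow_le_1 n). pose proof (Cmod_ge_0 x). nra.
Qed.

Lemma qbin_functional (u c z : C) :
  Cmod u * Cmod z < 1 ->
  ((1 - u * z) * qbin u c z)%C = ((1 - c * z) * qbin u c (RtoC q * z))%C.
Proof.
  intros Huz.
  assert (Hqz : Cmod u * Cmod (RtoC q * z) < 1).
  { pose proof (Cmod_qpow_mult_le z 1) as H. rewrite pow_1 in H.
    pose proof (Cmod_ge_0 u). pose proof (Cmod_ge_0 (RtoC q * z)). nra. }
  set (F := qbin u c z). set (G := qbin u c (RtoC q * z)).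
  set (d := fun j => (qbin_term u c z j - qbin_term u c (RtoC q * z) j)%C).
  assert (Hd_S : forall j,
            d (S j) = (u * z * qbin_term u c z j - c * z * qbin_term u c (RtoC q * z) j)%C).
  { intros j. unfold d. rewrite !qbin_term_scale.
    transitivity (qbin_term u c z (S j) * (1 - RtoC (q ^ S j)))%C; [ring|].
    rewrite qbin_term_S. ring. }
  assert (H1 : is_series (fun j => d (S j)) (F - G)%C).
  { apply is_series_incr_1.
    match goal with |- is_series _ ?l => replace l with (F - G)%C end.
    2:{ unfold d. rewrite !qbin_term_0. change (F - G = F - G + (1 - 1))%C. ring. }
    exact (is_series_minus _ _ _ _ (is_series_qbin u c z Huz) (is_series_qbin u c _ Hqz)). }
  assert (H2 : is_series (fun j => d (S j)) (u * z * F - c * z * G)%C).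
  { apply (is_series_ext (fun j => (u * z * qbin_term u c z j - c * z * qbin_term u c (RtoC q * z) j)%C)).
    - intros j. symmetry. apply Hd_S.
    - apply (is_series_minus (V := C_NormedModule)).
      + exact (is_series_scal (V := C_NormedModule) _ _ _ (is_series_qbin u c z Huz)).
      + exact (is_series_scal (V := C_NormedModule) _ _ _ (is_series_qbin u c _ Hqz)). }
  pose proof (lim_unique _ _ _ H1 H2) as E.
  transitivity (F - G - (u * z * F - c * z * G) + (1 - c * z) * G)%C; [ring|].
  rewrite E. ring.
Qed.

Lemma qbin_iterate (u c z : C) (N : nat) :
  Cmod u * Cmod z < 1 ->
  (qbin u c z * qpoch (u * z) q N)%C = (qpoch (c * z) q N * qbin u c (RtoC (q ^ N) * z))%C.
Proof.
  intros Huz. induction N as [|N IH].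
  - change (@eq C (qbin u c z * 1) (1 * qbin u c (RtoC 1 * z)))%C. rewrite !Cmult_1_l. apply Cmult_1_r.
  - set (w := (RtoC (q ^ N) * z)%C).
    assert (Hw : Cmod u * Cmod w < 1).
    { pose proof (Cmod_qpow_mult_le z N). pose proof (Cmod_ge_0 u). pose proof (Cmod_ge_0 w).
      unfold w in *. nra. }
    change (qpoch (u * z)%C q (S N)) with (qpoch (u * z) q N * (1 - u * z * RtoC (q ^ N)))%C.
    change (qpoch (c * z)%C q (S N)) with (qpoch (c * z) q N * (1 - c * z * RtoC (q ^ N)))%C.
    replace (RtoC (q ^ S N) * z)%C with (RtoC q * w)%C by (unfold w; simpl pow; rewrite RtoC_mult; ring).
    transitivity (qbin u c z * qpoch (u * z) q N * (1 - u * w))%C; [unfold w; ring|].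
    rewrite IH. transitivity (qpoch (c * z) q N * ((1 - u * w) * qbin u c w))%C; [fold w; ring|].
    rewrite (qbin_functional u c w Hw). unfold w. ring.
Qed.

Lemma qbin_lim_1 (u c z : C) :
  Cmod u * Cmod z < 1 -> (fun N => qbin u c (RtoC (q ^ N) * z)) --> RtoC 1.
Proof.
  intros Huz.
  assert (HuzN : forall N, Cmod u * Cmod (RtoC (q ^ N) * z) < 1).
  { intros N. pose proof (Cmod_qpow_mult_le z N). pose proof (Cmod_ge_0 u).
    pose proof (Cmod_ge_0 (RtoC (q ^ N) * z)). nra. }
  set (delta0 := fun j : nat => match j with O => RtoC 1 | S _ => RtoC 0 end).
  destruct (is_lim_series_dominated (fun N => qbin_term u c (RtoC (q ^ N) * z))
              (fun N => qbin u c (RtoC (q ^ N) * z)) delta0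
              (qbin_major (Cmod u) (Cmod c) (Cmod z))) as [L [HL Hlim]].
  - intros N. apply is_series_qbin, HuzN.
  - intros [|j].
    + apply (filterlim_ext (fun _ => RtoC 1)); [|apply filterlim_const].
      intros N. symmetry. apply qbin_term_0.
    + apply (filterlim_ext (fun N => RtoC ((q ^ S j) ^ N) * qbin_term u c z (S j))%C).
      * intros N. rewrite qbin_term_scale, <- !pow_mult, Nat.mul_comm. reflexivity.
      * replace (delta0 (S j)) with (RtoC 0 * qbin_term u c z (S j))%C by (simpl; ring).
        apply lim_mult; [|apply filterlim_const].
        apply lim_RtoC, is_lim_seq_geom.
        pose proof (qpow_pos (S j)). pose proof (qpow_S_lt_1 j). rewrite Rabs_pos_eq; lra.
  - intros N j. apply qbin_term_le; [apply Rle_refl | apply Cmod_qpow_mult_le].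
  - apply ex_series_qbin_major; auto using Cmod_ge_0.
  - replace (RtoC 1) with L; [exact Hlim|].
    apply (lim_unique (sum_n delta0)); [exact HL|].
    replace (RtoC 1) with (sum_n delta0 O) by apply sum_O.
    apply (is_series_finite delta0 O). intros [|k] Hk; [lia | reflexivity].
Qed.

Definition qpoch_inf (x : C) : C :=
  @iota C_CompleteNormedModule (fun l => (fun n => qpoch x q n) --> l).

Lemma qpoch_add (x : C) (k n : nat) :
  qpoch x q (k + n) = (qpoch x q k * qpoch (x * RtoC (q ^ k)) q n)%C.
Proof. exact (qpochh_add 1 x k n). Qed.

Lemma qpoch_zero (n : nat) : qpoch (RtoC 0) q n = RtoC 1.
Proof.
  induction n as [|n IH]; [reflexivity|].
  change (qpoch (RtoC 0) q n * (1 - RtoC 0 * RtoC (q ^ n)) = 1)%C. rewrite IH. ring.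
Qed.

(* By [qbin_iterate] with [u = 0]: [(x;q)_n * qbin 0 x q^n = qbin 0 x 1], and [qbin 0 x q^n -> 1]. *)
Lemma qpoch_inf_cv (x : C) : (fun n => qpoch x q n) --> qpoch_inf x.
Proof.
  assert (H01 : Cmod (RtoC 0) * Cmod (RtoC 1) < 1) by (rewrite Cmod_0; lra).
  assert (Hlim : (fun n => qpoch x q n) --> qbin (RtoC 0) x (RtoC 1)).
  { apply (lim_of_mult_lim_1 _ (fun n => qbin (RtoC 0) x (RtoC (q ^ n) * RtoC 1))).
    - intros n. pose proof (qbin_iterate (RtoC 0) x (RtoC 1) n H01) as E.
      replace (RtoC 0 * RtoC 1)%C with (RtoC 0) in E by ring.
      replace (x * RtoC 1)%C with x in E by ring.
      rewrite qpoch_zero, Cmult_1_r in E. symmetry. exact E.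
    - exact (qbin_lim_1 _ _ _ H01). }
  replace (qpoch_inf x) with (qbin (RtoC 0) x (RtoC 1)); [exact Hlim|].
  symmetry. unfold qpoch_inf.
  exact (@iota_filterlim_locally C_AbsRing C_CompleteNormedModule nat eventually _ _ _ Hlim).
Qed.

Theorem q_binomial (u c z : C) :
  Cmod u * Cmod z < 1 -> (qbin u c z * qpoch_inf (u * z))%C = qpoch_inf (c * z).
Proof.
  intros Huz. apply (lim_unique (fun N => qbin u c z * qpoch (u * z) q N)%C).
  - apply lim_mult; [apply filterlim_const | apply qpoch_inf_cv].
  - apply (filterlim_ext (fun N => qpoch (c * z) q N * qbin u c (RtoC (q ^ N) * z))%C).
    + intros N. symmetry. apply qbin_iterate, Huz.
    + rewrite <- (Cmult_1_r (qpoch_inf (c * z))).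
      apply lim_mult; [apply qpoch_inf_cv | apply qbin_lim_1, Huz].
Qed.

Lemma qpoch_inf_shift (x : C) (k : nat) :
  qpoch_inf x = (qpoch x q k * qpoch_inf (x * RtoC (q ^ k)))%C.
Proof.
  apply (lim_unique (fun n => qpoch x q (k + n))).
  - apply lim_shift, qpoch_inf_cv.
  - apply (filterlim_ext (fun n => qpoch x q k * qpoch (x * RtoC (q ^ k)) q n)%C).
    + intros n. symmetry. apply qpoch_add.
    + apply lim_mult; [apply filterlim_const | apply qpoch_inf_cv].
Qed.

Lemma qpoch_inf_zero : qpoch_inf (RtoC 0) = RtoC 1.
Proof.
  apply (lim_unique (fun n => qpoch (RtoC 0) q n)); [apply qpoch_inf_cv|].
  apply (filterlim_ext (fun _ => RtoC 1)); [intros n; symmetry; apply qpoch_zero | apply filterlim_const].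
Qed.

Lemma qpoch_inf_neq_0_small (x : C) : Cmod x < 1 -> qpoch_inf x <> RtoC 0.
Proof.
  intros Hx E.
  assert (Hx1 : Cmod x * Cmod (RtoC 1) < 1) by (rewrite Cmod_1; lra).
  pose proof (q_binomial x (RtoC 0) (RtoC 1) Hx1) as B.
  replace (x * RtoC 1)%C with x in B by ring.
  replace (RtoC 0 * RtoC 1)%C with (RtoC 0) in B by ring.
  rewrite E, Cmult_0_r, qpoch_inf_zero in B. apply RtoC_inj in B. lra.
Qed.

Lemma qpoch_inf_neq_0 (x : C) :
  (forall k, (1 - x * RtoC (q ^ k))%C <> RtoC 0) -> qpoch_inf x <> RtoC 0.
Proof.
  intros Hx.
  destruct (pow_lt_1_zero q ltac:(rewrite Rabs_pos_eq; lra) (/ (Cmod x + 1))) as [k Hk].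
  { apply Rinv_0_lt_compat. pose proof (Cmod_ge_0 x). lra. }
  specialize (Hk k (le_n k)). rewrite Rabs_pos_eq in Hk by (apply Rlt_le, qpow_pos).
  rewrite (qpoch_inf_shift x k). apply Cmult_neq_0.
  - apply Cprod_neq_0. intros i _. apply Hx.
  - apply qpoch_inf_neq_0_small.
    rewrite Cmod_mult, Cmod_R, Rabs_pos_eq by (apply Rlt_le, qpow_pos).
    pose proof (Cmod_ge_0 x).
    apply Rmult_lt_compat_l with (r := Cmod x + 1) in Hk; [|lra].
    rewrite Rinv_r in Hk by lra. pose proof (qpow_pos k). nra.
Qed.

Lemma qbin_eval (u c z : C) (k : nat) :
  Cmod u * Cmod z < 1 -> qpoch (c * z)%C q k <> RtoC 0 ->
  (qbin u (c * RtoC (q ^ k)) z = qpoch_inf (c * z) / (qpoch (c * z) q k * qpoch_inf (u * z)))%C.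
Proof.
  intros Huz Hck.
  assert (Hu : qpoch_inf (u * z) <> RtoC 0) by (apply qpoch_inf_neq_0_small; rewrite Cmod_mult; exact Huz).
  rewrite (qpoch_inf_shift (c * z)%C k).
  replace (c * z * RtoC (q ^ k))%C with (c * RtoC (q ^ k) * z)%C by ring.
  rewrite <- (q_binomial u (c * RtoC (q ^ k))%C z Huz).
  field. split; assumption.
Qed.

(* [Defs] builds [Cx] and its operations exactly as Coquelicot builds [C], so the two agree
   definitionally; this is used here and in the final translation. *)
Lemma Hq_sum_n (m n : nat) (z1 z2 : C) :
  Hq m n z1 z2 q = sum_n (fun k => qfac m / (qfac k * qfac (m - k)) * (qfac n / (qfac k * qfac (n - k)))
                             * RtoC (-1) ^ k * RtoC (q ^ binom2 k) * qfac k
                             * (z1 ^ (m - k) * z2 ^ (n - k)))%C (Nat.min m n).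
Proof. exact (Csum_sum_n _ _). Qed.

Section Identity.

Variables a b u v z1 z2 : C.
Hypothesis Huz : Cmod u * Cmod z1 < 1.
Hypothesis Hvz : Cmod v * Cmod z2 < 1.

Definition lhs_term (m n : nat) : C :=
  (Hq m n z1 z2 q * (qpochh u a m * qpochh v b n / (qfac m * qfac n)))%C.

Definition weight (k : nat) : C :=
  (RtoC (-1) ^ k * RtoC (q ^ binom2 k) / qfac k * qpochh u a k * qpochh v b k)%C.

Definition u_part (k : nat) : nat -> C := delay k (qbin_term u (a * RtoC (q ^ k)) z1).
Definition v_part (k : nat) : nat -> C := delay k (qbin_term v (b * RtoC (q ^ k)) z2).

Lemma lhs_term_expand (m n : nat) :
  lhs_term m n = sum_n (fun k => weight k * u_part k m * v_part k n)%C m.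
Proof.
  unfold lhs_term. rewrite Hq_sum_n, sum_n_Cmult_r.
  rewrite (sum_n_zero_tail _ (Nat.min m n) m).
  2:{ intros k Hk. unfold u_part, v_part, delay.
      destruct (Nat.leb_spec k m), (Nat.leb_spec k n); try lia; ring. }
  2:{ apply Nat.le_min_l. }
  apply sum_n_ext_loc. intros k Hk.
  assert (Hkm : (k <= m)%nat) by lia. assert (Hkn : (k <= n)%nat) by lia.
  unfold u_part, v_part, delay, qbin_term, weight.
  destruct (Nat.leb_spec k m), (Nat.leb_spec k n); try lia.
  replace (qpochh u a m) with (qpochh u a k * qpochh u (a * RtoC (q ^ k)) (m - k))%C
    by (rewrite <- qpochh_add; f_equal; lia).
  replace (qpochh v b n) with (qpochh v b k * qpochh v (b * RtoC (q ^ k)) (n - k))%C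
    by (rewrite <- qpochh_add; f_equal; lia).
  pose proof (qfac_neq_0 m). pose proof (qfac_neq_0 n). pose proof (qfac_neq_0 k).
  pose proof (qfac_neq_0 (m - k)). pose proof (qfac_neq_0 (n - k)).
  C_eq. field. repeat split; assumption.
Qed.

Definition u_sum (k : nat) : C := qbin u (a * RtoC (q ^ k)) z1.
Definition v_sum (k : nat) : C := qbin v (b * RtoC (q ^ k)) z2.

Definition row_sum (m : nat) : C := sum_n (fun k => weight k * u_part k m * v_sum k)%C m.

Lemma Cmod_mult_qpow_le (x : C) (k : nat) : Cmod (x * RtoC (q ^ k)) <= Cmod x.
Proof. rewrite Cmult_comm. apply Cmod_qpow_mult_le. Qed.

Lemma is_series_lhs_row (m : nat) : is_series (lhs_term m) (row_sum m).
Proof.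
  apply (is_series_ext (fun n => sum_n (fun k => weight k * u_part k m * v_part k n)%C m)).
  - intros n. symmetry. apply lhs_term_expand.
  - apply is_series_sum_n. intros k.
    apply (is_series_scal (V := C_NormedModule) (weight k * u_part k m)%C).
    apply is_series_delay, is_series_qbin, Hvz.
Qed.

Lemma sum_row_sum (M : nat) :
  sum_n row_sum M = sum_n (fun k => weight k * v_sum k * sum_n (u_part k) M)%C M.
Proof.
  unfold row_sum.
  rewrite (sum_n_ext_loc _ (fun m => sum_n (fun k => weight k * u_part k m * v_sum k)%C M)).
  - rewrite sum_n_switch. apply sum_n_ext. intros k.
    rewrite Cmult_comm, sum_n_Cmult_r. apply sum_n_ext. intros m. C_eq. ring.
  - intros m Hm. symmetry. apply sum_n_zero_tail; [|exact Hm].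
    intros k Hk. unfold u_part, delay. destruct (Nat.leb_spec k m); [lia | C_eq; ring].
Qed.

Lemma binom2_S (k : nat) : binom2 (S k) = (binom2 k + k)%nat.
Proof.
  unfold binom2. replace (S k * (S k - 1))%nat with (k * (k - 1) + k * 2)%nat.
  - rewrite Nat.div_add by lia. reflexivity.
  - destruct k; simpl; nia.
Qed.

Lemma weight_S (k : nat) :
  (weight (S k) * (1 - RtoC (q ^ S k)))%C
  = (weight k * - RtoC (q ^ k) * (u - a * RtoC (q ^ k)) * (v - b * RtoC (q ^ k)))%C.
Proof.
  unfold weight. rewrite binom2_S, pow_add, RtoC_mult, qfac_S.
  change (qpochh u a (S k)) with (qpochh u a k * (u - a * RtoC (q ^ k)))%C.
  change (qpochh v b (S k)) with (qpochh v b k * (v - b * RtoC (q ^ k)))%C.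
  pose proof (qfac_neq_0 k). pose proof (one_sub_qpow_neq_0 k).
  simpl Cpow. field. split; assumption.
Qed.

Lemma ex_series_weight : ex_series (fun k => Cmod (weight k)).
Proof.
  set (B := (Cmod u + Cmod a) * (Cmod v + Cmod b)).
  apply (ex_series_ratio _ (fun k => q ^ k * (B / (1 - q))) 0).
  - intros k. apply Cmod_ge_0.
  - intros k. pose proof (qpow_pos k). pose proof (qpow_le_1 k). pose proof (qpow_S_lt_1 k).
    assert (HqS : 1 - q <= 1 - q ^ S k) by (simpl; nra).
    assert (Hdiff : forall x y : C, Cmod (x - y * RtoC (q ^ k)) <= Cmod x + Cmod y).
    { intros x y. eapply Rle_trans; [apply Cmod_triangle|]. rewrite Cmod_opp.
      pose proof (Cmod_mult_qpow_le y k). lra. }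
    assert (Hstep : Cmod (weight (S k)) * (1 - q ^ S k) <= Cmod (weight k) * q ^ k * B).
    { rewrite <- (Rabs_pos_eq (1 - q ^ S k)) by lra.
      rewrite <- Cmod_R, RtoC_minus, <- Cmod_mult, weight_S.
      rewrite !Cmod_mult, Cmod_opp, Cmod_R, Rabs_pos_eq by lra.
      unfold B. rewrite !Rmult_assoc.
      apply Rmult_le_compat_l; [apply Cmod_ge_0|]. apply Rmult_le_compat_l; [lra|].
      apply Rmult_le_compat; auto using Cmod_ge_0. }
    apply Rmult_le_reg_r with (1 - q); [lra|].
    replace (q ^ k * (B / (1 - q)) * Cmod (weight k) * (1 - q)) with (Cmod (weight k) * q ^ k * B)
      by (field; lra).
    eapply Rle_trans; [|exact Hstep]. apply Rmult_le_compat_l; [apply Cmod_ge_0 | exact HqS].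
  - replace 0 with (0 * (B / (1 - q))) by ring. apply is_lim_seq_mult'; [|apply is_lim_seq_const].
    apply is_lim_seq_geom. rewrite Rabs_pos_eq; lra.
  - lra.
Qed.

Lemma Cmod_sum_u_part_le (k M : nat) :
  Cmod (sum_n (u_part k) M) <= Series (qbin_major (Cmod u) (Cmod a) (Cmod z1)).
Proof.
  assert (Hpartial : forall n, Cmod (sum_n (qbin_term u (a * RtoC (q ^ k)) z1) n)
                               <= Series (qbin_major (Cmod u) (Cmod a) (Cmod z1)))
    by (intros n; apply qbin_partial_le; [exact Huz | apply Cmod_mult_qpow_le]).
  unfold u_part. destruct (Nat.lt_ge_cases M k) as [HMk|HkM].
  - rewrite sum_n_delay_lt, Cmod_0 by exact HMk.
    eapply Rle_trans; [apply Cmod_ge_0 | apply (Hpartial O)].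
  - replace M with (k + (M - k))%nat by lia. rewrite sum_n_delay. apply Hpartial.
Qed.

Lemma is_series_row_sum :
  exists L, is_series (fun k => weight k * v_sum k * u_sum k)%C L /\ is_series row_sum L.
Proof.
  set (Bu := Series (qbin_major (Cmod u) (Cmod a) (Cmod z1))).
  set (Bv := Series (qbin_major (Cmod v) (Cmod b) (Cmod z2))).
  destruct (is_lim_series_dominated (fun M k => weight k * v_sum k * sum_n (u_part k) M)%C
              (sum_n row_sum) (fun k => weight k * v_sum k * u_sum k)%C
              (fun k => Cmod (weight k) * Bv * Bu)) as [L [HL Hrows]].
  - intros M. rewrite sum_row_sum. apply is_series_finite. intros k Hk.
    unfold u_part. rewrite sum_n_delay_lt by exact Hk. apply Cmult_0_r.
  - intros k. apply lim_mult; [apply filterlim_const|].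
    unfold u_part, u_sum. apply is_series_delay, is_series_qbin, Huz.
  - intros M k. rewrite !Cmod_mult.
    apply Rmult_le_compat; [apply Rmult_le_pos; apply Cmod_ge_0 | apply Cmod_ge_0 | | apply Cmod_sum_u_part_le].
    apply Rmult_le_compat_l; [apply Cmod_ge_0|].
    unfold v_sum, Bv. apply qbin_le; [exact Hvz | apply Cmod_mult_qpow_le].
  - apply ex_series_scal_r, ex_series_scal_r, ex_series_weight.
  - exists L. split; assumption.
Qed.

Section Evaluation.

Hypothesis Ha : forall k, (1 - a * z1 * RtoC (q ^ k))%C <> RtoC 0.
Hypothesis Hb : forall k, (1 - b * z2 * RtoC (q ^ k))%C <> RtoC 0.

Definition rhs_term (k : nat) : C :=
  (Cprod (fun i => (u - a * RtoC (q ^ i)) * (v - b * RtoC (q ^ i)))%C k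
     / (qfac k * qpoch (a * z1) q k * qpoch (b * z2) q k) * RtoC (-1) ^ k * RtoC (q ^ binom2 k))%C.

Let P := (qpoch_inf (a * z1) * qpoch_inf (b * z2))%C.
Let Q := (qpoch_inf (u * z1) * qpoch_inf (v * z2))%C.

Lemma weight_sums_eval (k : nat) : (weight k * v_sum k * u_sum k)%C = (P / Q * rhs_term k)%C.
Proof.
  assert (Hak : qpoch (a * z1)%C q k <> RtoC 0) by (apply Cprod_neq_0; intros i _; apply Ha).
  assert (Hbk : qpoch (b * z2)%C q k <> RtoC 0) by (apply Cprod_neq_0; intros i _; apply Hb).
  assert (Hu : qpoch_inf (u * z1) <> RtoC 0) by (apply qpoch_inf_neq_0_small; rewrite Cmod_mult; exact Huz).
  assert (Hv : qpoch_inf (v * z2) <> RtoC 0) by (apply qpoch_inf_neq_0_small; rewrite Cmod_mult; exact Hvz).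
  pose proof (qfac_neq_0 k).
  unfold weight, u_sum, v_sum, rhs_term, P, Q.
  rewrite (qbin_eval u a z1 k Huz Hak), (qbin_eval v b z2 k Hvz Hbk), Cprod_mult.
  fold (qpochh u a k) (qpochh v b k). C_eq.
  field. repeat split; assumption.
Qed.

Lemma P_neq_0 : P <> RtoC 0.
Proof. apply Cmult_neq_0; apply qpoch_inf_neq_0; assumption. Qed.

Lemma Q_neq_0 : Q <> RtoC 0.
Proof. apply Cmult_neq_0; apply qpoch_inf_neq_0_small; rewrite Cmod_mult; assumption. Qed.

Theorem hermite_generating_function :
  exists (P Q S : C) (T : nat -> C),
    (fun n => qpoch (a * z1) q n * qpoch (b * z2) q n)%C --> P /\
    (fun n => qpoch (u * z1) q n * qpoch (v * z2) q n)%C --> Q /\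
    is_series rhs_term S /\ (forall m, is_series (lhs_term m) (T m)) /\ is_series T (P / Q * S)%C.
Proof.
  destruct is_series_row_sum as [L [HL Hrows]].
  pose proof P_neq_0. pose proof Q_neq_0.
  exists P, Q, (Q / P * L)%C, row_sum. repeat split.
  - apply lim_mult; apply qpoch_inf_cv.
  - apply lim_mult; apply qpoch_inf_cv.
  - apply (is_series_ext (fun k => Q / P * (weight k * v_sum k * u_sum k))%C).
    + intros k. rewrite weight_sums_eval. C_eq. field. split; assumption.
    + exact (is_series_scal (V := C_NormedModule) _ _ _ HL).
  - exact is_series_lhs_row.
  - assert (E : (P / Q * (Q / P * L))%C = L :> C) by (field; split; assumption).
    rewrite E. exact Hrows.
Qed.

End Evaluation.

End Identity.

End QBinomial.

Lemma Cmod_mult_lt (x y : C) (r : R) : Cmod (x * y) < r -> Cmod x * Cmod y < r.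
Proof. rewrite Cmod_mult. exact (fun H => H). Qed.

Lemma one_minus_neq_0 (x : C) : x <> RtoC 1 -> (1 - x)%C <> RtoC 0.
Proof. intros Hx E. apply Hx. replace x with (1 - (1 - x))%C by ring. rewrite E. ring. Qed.

End QHermite.

Theorem theorem3p4 :
  forall (q : R) (a b u v z1 z2 : Cx),
    0 < q < 1 ->
    Cmod (Cmul u z1) < 1 ->
    Cmod (Cmul v z2) < 1 ->
    (forall k : nat, Cmul (Cmul a z1) (RtoC (q ^ k)) <> Cone) ->
    (forall k : nat, Cmul (Cmul b z2) (RtoC (q ^ k)) <> Cone) ->
    exists P Q S : Cx,
      (* P = (a z1, b z2; q)_oo *)
      Cseq_cv (fun n => Cmul (qpoch (Cmul a z1) q n) (qpoch (Cmul b z2) q n)) P /\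
      (* Q = (u z1, v z2; q)_oo *)
      Cseq_cv (fun n => Cmul (qpoch (Cmul u z1) q n) (qpoch (Cmul v z2) q n)) Q /\
      (* S = the 2phi2 series on the right-hand side *)
      Cseries_cv
        (fun k =>
           Cmul (Cmul
             (Cdiv (Cprod (fun i => Cmul (Csub u (Cmul a (RtoC (q ^ i))))
                                         (Csub v (Cmul b (RtoC (q ^ i))))) k)
                   (Cmul (Cmul (qpoch (RtoC q) q k) (qpoch (Cmul a z1) q k))
                         (qpoch (Cmul b z2) q k)))
             (Cpow (RtoC (-1)) k))
             (RtoC (q ^ binom2 k)))
        S /\
      (* the double series on the left, summed as sum_m (sum_n ...), equals P/Q * S *)
      exists T : nat -> Cx,
        (forall m : nat,
           Cseries_cv
             (fun n =>
                Cmul (Hq m n z1 z2 q)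
                  (Cdiv (Cmul (Cprod (fun i => Csub u (Cmul a (RtoC (q ^ i)))) m)
                              (Cprod (fun i => Csub v (Cmul b (RtoC (q ^ i)))) n))
                        (Cmul (qpoch (RtoC q) q m) (qpoch (RtoC q) q n))))
             (T m)) /\
        Cseries_cv T (Cmul (Cdiv P Q) S).
Proof.
  intros q a b u v z1 z2 Hq Hu Hv Ha Hb.
  destruct (QHermite.hermite_generating_function q Hq a b u v z1 z2
              (QHermite.Cmod_mult_lt _ _ _ Hu) (QHermite.Cmod_mult_lt _ _ _ Hv)
              (fun k => QHermite.one_minus_neq_0 _ (Ha k)) (fun k => QHermite.one_minus_neq_0 _ (Hb k)))
    as (P & Q & S & T & HP & HQ & HS & HT & HTS).
  exists P, Q, S.
  split; [apply QHermite.Cseq_cv_lim, HP|].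
  split; [apply QHermite.Cseq_cv_lim, HQ|].
  split; [apply QHermite.Cseries_cv_is_series, HS|].
  exists T. split.
  - intros m. apply QHermite.Cseries_cv_is_series, HT.
  - apply QHermite.Cseries_cv_is_series, HTS.
Qed.
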